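(* Let $C>0$ and $a,b\in\mathbb{R}$, and let $w(x)=Ce^{ax+b}$. For $\sigma>0$ and $x,y\in\mathbb{R}$ define the one-step transition density $$p_1(x\mid y,\sigma,C,a,b)=\frac{k_\sigma(x;y)\,w(x)}{\int_{\mathbb{R}}k_\sigma(z;y)\,w(z)\,\mathrm{d}z},$$ where $k_\sigma(\cdot;y)$ is the Gaussian density with mean $y$ and standard deviation $\sigma$, and for $n\in\mathbb{N}$ define the $n$-step density $$p_n(x_n\mid x_0,\sigma,C,a,b)=\int_{\mathbb{R}^{n-1}}\prod_{k=1}^{n}p_1(x_k\mid x_{k-1},\sigma,C,a,b)\,\mathrm{d}x_1\cdots\mathrm{d}x_{n-1}.$$ Then the model is robust of degree $n$ for every $n\in\mathbb{N}$ with parameter transformation $g_n(\sigma,C,a,b)=(\sqrt{n}\,\sigma,C,a,b)$; that is, for all $n\in\mathbb{N}$, $\sigma>0$ and $x,y\in\mathbb{R}$, $$p_n(x\mid y,\sigma,C,a,b)=p_1(x\mid y,\sqrt{n}\,\sigma,C,a,b).$$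
   Context: This concerns a one-dimensional discrete-time Markov movement model (locations $X_t\in\mathbb{R}$ at times $0,\tau,2\tau,\dots$) whose one-step transition density is a Gaussian movement kernel multiplied by a positive spatial weighting function $w$ and renormalized, as written in the claim. A model is called robust of degree $n$ if there is an injective map $g_n$ on the parameter space with $p_n(x\mid y,\bm\theta)=p_1(x\mid y,g_n(\bm\theta))$ for all $x,y$. *)

From HB Require Import structures.
From mathcomp Require Import all_boot all_order all_algebra.
From mathcomp Require Import all_classical all_reals all_analysis.
Set Implicit Arguments. Unset Strict Implicit. Unset Printing Implicit Defensive.
Import Order.TTheory GRing.Theory Num.Theory.
Import numFieldNormedType.Exports.
Local Open Scope classical_set_scope.
Local Open Scope ring_scope.

Section Model.
Context {R : realType}.

Definition kern (sigma y x : R) : R := normal_pdf y sigma x.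

Definition wfun (C a b x : R) : R := C * expR (a * x + b).

Definition p1 (sigma C a b : R) (x y : R) : R :=
  kern sigma y x * wfun C a b x /
  (\int[@lebesgue_measure R]_(z in [set: R]) (kern sigma y z * wfun C a b z)).

(* pn_aux m x x0 = p_{m+1}(x | x0): the integral over R^m of the product
   prod_{k=1}^{m+1} p_1(x_k | x_{k-1}) written as an iterated integral
   (integrating out the intermediate locations one at a time). *)
Fixpoint pn_aux (m : nat) (sigma C a b : R) (x x0 : R) : R :=
  match m with
  | 0 => p1 sigma C a b x x0
  | m'.+1 => \int[@lebesgue_measure R]_(z in [set: R])
               (pn_aux m' sigma C a b z x0 * p1 sigma C a b x z)
  end.

Definition pn (n : nat) (sigma C a b : R) (x x0 : R) : R :=
  pn_aux n.-1 sigma C a b x x0.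

End Model.

(** Multiplying a Gaussian kernel by an exponential weight only shifts its
    mean (completing the square), so [p1 x y] is the density of
    [N(y + a sigma^2, sigma^2)] at [x]: a Gaussian random walk with drift.
    Composing [n] steps of it convolves Gaussians, which adds means and
    variances, giving [N(y + n a sigma^2, n sigma^2)] — the one-step density
    for the standard deviation [sqrt n * sigma]. *)
From HB Require Import structures.
From mathcomp Require Import all_boot all_order all_algebra.
From mathcomp Require Import all_classical all_reals all_analysis.
From mathcomp Require Import ring.
Import Order.TTheory GRing.Theory Num.Theory.
Local Open Scope ring_scope.

Section gaussian_algebra.
Context {R : realType}.
Implicit Types m s t x z : R.

Lemma normal_pdf_peak_fun m s x : s != 0 ->
  normal_pdf m s x = normal_peak s * normal_fun m s x.
Proof. by move=> s0; rewrite /normal_pdf (negbTE s0). Qed.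

Lemma RintegralZ_normal_pdf (K m s : R) :
  \int[@lebesgue_measure R]_(z in [set: R]) (K * normal_pdf m s z) = K.
Proof.
rewrite RintegralZl //; last exact: integrable_normal_pdf.
by rewrite /Rintegral integral_normal_pdf mulr1.
Qed.

Lemma normal_pdf_eq_sqr m s t x : s != 0 -> t != 0 -> s ^+ 2 = t ^+ 2 ->
  normal_pdf m s x = normal_pdf m t x.
Proof.
move=> s0 t0 st; rewrite !normal_pdf_peak_fun //.
by rewrite /normal_peak /normal_fun st.
Qed.

Lemma normal_pdf_shift m s c x : s != 0 ->
  normal_pdf (m + c) s x = normal_pdf m s (x - c).
Proof.
move=> s0; rewrite !normal_pdf_peak_fun // /normal_fun.
by rewrite opprD addrA addrAC.
Qed.

Lemma normal_pdf_sym m s x : s != 0 -> normal_pdf m s x = normal_pdf x s m.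
Proof.
by move=> s0; rewrite !normal_pdf_peak_fun // /normal_fun -sqrrN opprB.
Qed.

Lemma normal_fun_tilt m s a z : s != 0 ->
  normal_fun m s z * expR (a * z) =
  expR (a * m + a ^+ 2 * s ^+ 2 / 2) * normal_fun (m + a * s ^+ 2) s z.
Proof.
move=> s0; rewrite /normal_fun -!expRD; congr expR.
by rewrite !mulr2n; field; rewrite -mulr2n mulrn_eq0 sqrf_eq0 s0.
Qed.

Section product.
Variables (m1 m2 s1 s2 : R).
Hypotheses (s10 : s1 != 0) (s20 : s2 != 0).

Let T := s1 ^+ 2 + s2 ^+ 2.

Let T_gt0 : 0 < T.
Proof. by rewrite addr_gt0 // exprn_even_gt0. Qed.

Let sqrT_sqr : Num.sqrt T ^+ 2 = T.
Proof. by rewrite sqr_sqrtr // ltW. Qed.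

Let sqrT0 : Num.sqrt T != 0.
Proof. by rewrite gt_eqF // sqrtr_gt0. Qed.

Let u := s1 * s2 / Num.sqrt T.

Let u0 : u != 0.
Proof. by rewrite /u !mulf_neq0 // invr_neq0. Qed.

Let u_sqr : u ^+ 2 = s1 ^+ 2 * s2 ^+ 2 / T.
Proof. by rewrite expr_div_n exprMn sqrT_sqr. Qed.

Let normal_peakM :
  normal_peak s1 * normal_peak s2 = normal_peak (Num.sqrt T) * normal_peak u.
Proof.
have sqr_pi_ge0 r : 0 <= r ^+ 2 * pi *+ 2.
  by rewrite mulrn_wge0 // mulr_ge0 ?pi_ge0 ?sqr_ge0.
rewrite /normal_peak -!invfM -!sqrtrM ?sqr_pi_ge0 // sqrT_sqr u_sqr.
congr (Num.sqrt _)^-1; rewrite /T !mulr2n; field.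
by rewrite gt_eqF.
Qed.

Let normal_funM z :
  normal_fun m1 s1 z * normal_fun m2 s2 z =
  normal_fun m1 (Num.sqrt T) m2 * normal_fun ((m1 * s2 ^+ 2 + m2 * s1 ^+ 2) / T) u z.
Proof.
rewrite /normal_fun -!expRD sqrT_sqr u_sqr; congr expR.
rewrite /T !mulr2n; field.
by rewrite !gt_eqF ?addr_gt0 ?exprn_even_gt0 ?mulf_neq0.
Qed.

Lemma normal_pdfM z :
  normal_pdf m1 s1 z * normal_pdf m2 s2 z =
  normal_pdf m1 (Num.sqrt T) m2 * normal_pdf ((m1 * s2 ^+ 2 + m2 * s1 ^+ 2) / T) u z.
Proof.
rewrite !normal_pdf_peak_fun //.
by rewrite mulrACA normal_peakM normal_funM mulrACA.
Qed.

End product.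

Lemma Rintegral_normal_pdf_conv m x s1 s2 : s1 != 0 -> s2 != 0 ->
  \int[@lebesgue_measure R]_(z in [set: R]) (normal_pdf m s1 z * normal_pdf z s2 x) =
  normal_pdf m (Num.sqrt (s1 ^+ 2 + s2 ^+ 2)) x.
Proof.
move=> s10 s20.
under eq_Rintegral do rewrite [normal_pdf _ s2 x]normal_pdf_sym // normal_pdfM //.
exact: RintegralZ_normal_pdf.
Qed.

End gaussian_algebra.

Section transition_densities.
Context {R : realType}.
Variables (C a b : R).
Hypothesis C0 : C != 0.
Implicit Types s x y z : R.

Let sqrt_natS_mul_neq0 (k : nat) s : s != 0 -> Num.sqrt k.+1%:R * s != 0.
Proof. by move=> s0; rewrite mulf_neq0 // gt_eqF // sqrtr_gt0 ltr0n. Qed.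

Lemma kern_wfun_tilt s y z : s != 0 ->
  kern s y z * wfun C a b z =
  C * expR (a * y + a ^+ 2 * s ^+ 2 / 2 + b) * normal_pdf (y + a * s ^+ 2) s z.
Proof.
move=> s0; rewrite /kern /wfun !normal_pdf_peak_fun // !(expRD _ b).
transitivity (C * expR b * normal_peak s * (normal_fun y s z * expR (a * z))).
  by ring.
by rewrite normal_fun_tilt //; ring.
Qed.

Lemma p1_normal_pdf s x y : s != 0 ->
  p1 s C a b x y = normal_pdf (y + a * s ^+ 2) s x.
Proof.
move=> s0; rewrite /p1.
under eq_Rintegral do rewrite kern_wfun_tilt //.
rewrite RintegralZ_normal_pdf kern_wfun_tilt // mulrAC divff ?mul1r //.
by rewrite mulf_neq0 // gt_eqF // expR_gt0.
Qed.

Lemma pn_aux_normal_pdf s m x y : s != 0 ->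
  pn_aux m s C a b x y =
  normal_pdf (y + m.+1%:R * a * s ^+ 2) (Num.sqrt m.+1%:R * s) x.
Proof.
move=> s0; elim: m x => [|m IH] x /=.
  by rewrite p1_normal_pdf // sqrtr1 !mul1r.
have sd_sqr k : (Num.sqrt k.+1%:R * s) ^+ 2 = k.+1%:R * s ^+ 2.
  by rewrite exprMn sqr_sqrtr ?ler0n.
have var_add : (Num.sqrt m.+1%:R * s) ^+ 2 + s ^+ 2 = (Num.sqrt m.+2%:R * s) ^+ 2.
  by rewrite !sd_sqr -[m.+2%:R]natr1 mulrDl mul1r.
under eq_Rintegral do
  rewrite IH p1_normal_pdf // [normal_pdf _ s x]normal_pdf_shift //.
rewrite Rintegral_normal_pdf_conv ?sqrt_natS_mul_neq0 // var_add sqrtr_sqr.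
rewrite (@normal_pdf_eq_sqr _ _ _ (Num.sqrt m.+2%:R * s))
  ?normr_eq0 ?sqrt_natS_mul_neq0 ?real_normK ?num_real //.
have mean_add : y + m.+1%:R * a * s ^+ 2 + a * s ^+ 2 = y + m.+2%:R * a * s ^+ 2.
  by rewrite -addrA -[m.+2%:R]natr1 mulrDl mulrDl mul1r.
by rewrite -normal_pdf_shift ?sqrt_natS_mul_neq0 // mean_add.
Qed.

Lemma pn_aux_p1 s m x y : s != 0 ->
  pn_aux m s C a b x y = p1 (Num.sqrt m.+1%:R * s) C a b x y.
Proof.
move=> s0; rewrite pn_aux_normal_pdf // p1_normal_pdf ?sqrt_natS_mul_neq0 //.
by rewrite exprMn sqr_sqrtr ?ler0n // (mulrCA a) (mulrA m.+1%:R a).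
Qed.

End transition_densities.

Theorem theorem2 (R : realType) (C a b : R) (hC : 0 < C) :
  forall (n : nat), (0 < n)%N ->
  forall (sigma : R), 0 < sigma ->
  forall x y : R,
    pn n sigma C a b x y = p1 (Num.sqrt (n%:R) * sigma) C a b x y.
Proof.
move=> n n_gt0 s s_gt0 x y; rewrite -(prednK n_gt0).
by apply: pn_aux_p1; rewrite gt_eqF.
Qed.
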